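(* Let $F$ be a field of characteristic zero and $n,m$ natural numbers. If an ideal $I$ of $W(n,m)$ contains $\partial_i$ for some $1\le i\le n+m$, then $I=W(n,m)$.
   Context: $W(n,m)$ has basis $e^{\alpha}x^{\beta}\partial_i$ ($\alpha\in\mathbb Z^n$, $\beta\in\mathbb Z^{n+m}$, $1\le i\le n+m$), realized as vector fields $f\partial_i$ with $f$ in the commutative algebra with basis $e^{\alpha}x^{\beta}$ (multiplication adding exponents), $\partial_i(e^{\alpha}x^{\beta})=a_ie^{\alpha}x^{\beta}+b_ie^{\alpha}x^{\beta-\epsilon_i}$ with $a_i:=0$ for $i>n$, and bracket $[f\partial_i,g\partial_j]=f\partial_i(g)\partial_j-g\partial_j(f)\partial_i$; $\partial_i$ denotes the basis element $e^{0}x^{0}\partial_i$. *)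

From HB Require Import structures.
From mathcomp Require Import all_boot all_order all_algebra.
From mathcomp Require Import finmap.
From mathcomp.multinomials Require Import monalg.
Set Implicit Arguments. Unset Strict Implicit. Unset Printing Implicit Defensive.
Import Order.TTheory GRing.Theory Num.Theory.
Local Open Scope ring_scope.

(* The Lie algebra W(n,m) over a field F.
   A basis index (alpha, beta, i) stands for e^alpha x^beta \partial_i with
   alpha in Z^n, beta in Z^(n+m), i in {1..n+m} (here 0-based: i : 'I_(n+m)). *)
Definition Widx (n m : nat) : choiceType :=
  (n.-tuple int * (n + m).-tuple int * 'I_(n + m))%type.

Definition W (F : fieldType) (n m : nat) := {malg F[Widx n m]}.

Definition tadd k (a b : k.-tuple int) : k.-tuple int :=
  [tuple tnth a j + tnth b j | j < k].

Definition tsubeps k (b : k.-tuple int) (i : 'I_k) : k.-tuple int :=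
  [tuple tnth b j - (j == i)%:Z | j < k].

(* a_i(alpha): the i-th coordinate of alpha when i < n (0-based), 0 otherwise *)
Definition acoef n (a : n.-tuple int) (i : nat) : int := nth 0%Z (val a) i.

Definition Wb (F : fieldType) n m (k : Widx n m) : W F n m := << k >>.

(* bracket of basis elements:
   [e^a x^b d_i, e^c x^d d_j]
     = c_i e^(a+c) x^(b+d) d_j + d_i e^(a+c) x^(b+d-eps_i) d_j
       - a_j e^(a+c) x^(b+d) d_i - b_j e^(a+c) x^(b+d-eps_j) d_i *)
Definition brB (F : fieldType) n m (k l : Widx n m) : W F n m :=
  let: (a, b, i) := k in
  let: (c, d, j) := l in
  let ac := tadd a c in
  let bd := tadd b d in
    (acoef c i)%:~R *: Wb F (ac, bd, j)
  + (tnth d i)%:~R *: Wb F (ac, tsubeps bd i, j)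
  - (acoef a j)%:~R *: Wb F (ac, bd, i)
  - (tnth b j)%:~R *: Wb F (ac, tsubeps bd j, i).

Definition Wbr (F : fieldType) n m (u v : W F n m) : W F n m :=
  \sum_(k <- msupp u) \sum_(l <- msupp v) (u@_k * v@_l) *: brB F k l.

Definition Wd (F : fieldType) n m (i : 'I_(n + m)) : W F n m :=
  Wb F ([tuple 0%Z | _ < n], [tuple 0%Z | _ < n + m], i).

Definition is_ideal (F : fieldType) n m (I : W F n m -> Prop) : Prop :=
  [/\ I 0,
      (forall x y, I x -> I y -> I (x + y)),
      (forall (c : F) x, I x -> I (c *: x)) &
      (forall x y, I y -> I (Wbr x y))].

From mathcomp Require Import all_boot all_order all_algebra.
From mathcomp Require Import finmap.
From mathcomp.multinomials Require Import monalg.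
Set Implicit Arguments. Unset Strict Implicit. Unset Printing Implicit Defensive.
Import GRing.Theory.
Local Open Scope ring_scope.

(* Write x_i for the i-th polynomial variable.  From [d_i, x_i^2 d_i] = 2 x_i d_i
   the ideal contains x_i d_i.  For a basis element u = e^c x^d d_j, putting
   u' = e^c x^(d + eps_i) d_j, one computes
     [d_i, u'] - [x_i d_i, u] = (1 + delta_ij) u,
   so every basis element lies in the ideal, as 2 is invertible in F. *)

Definition tzero k : k.-tuple int := [tuple 0%Z | _ < k].

Definition teps k (i : 'I_k) : k.-tuple int := [tuple (j == i)%:Z | j < k].

Section Tuples.

Variable k : nat.
Implicit Types (a b : k.-tuple int) (i : 'I_k).

Lemma taddC a b : tadd a b = tadd b a.
Proof. by apply: eq_from_tnth => j; rewrite !tnth_mktuple addrC. Qed.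

Lemma tadd0l a : tadd (tzero k) a = a.
Proof. by apply: eq_from_tnth => j; rewrite !tnth_mktuple add0r. Qed.

Lemma tnth_tzero i : tnth (tzero k) i = 0%Z.
Proof. by rewrite tnth_mktuple. Qed.

Lemma tnth_teps i j : tnth (teps i) j = (j == i)%:Z.
Proof. by rewrite tnth_mktuple. Qed.

Lemma acoef_tzero j : acoef (tzero k) j = 0%Z.
Proof.
rewrite /acoef; case: (ltnP j k) => [ltjk|lekj]; last by rewrite nth_default ?size_tuple.
by rewrite -(tnth_nth 0%Z (tzero k) (Ordinal ltjk)) tnth_tzero.
Qed.

Lemma tsubeps_teps_add i b : tsubeps (tadd (teps i) b) i = b.
Proof.
by apply: eq_from_tnth => j; rewrite !tnth_mktuple [_ + tnth b j]addrC addrK.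
Qed.

Lemma tnth_teps_add i b : tnth (tadd (teps i) b) i = tnth b i + 1.
Proof. by rewrite tnth_mktuple tnth_teps eqxx addrC. Qed.

End Tuples.

Section MonomialAlgebra.

Variables (F : fieldType) (K : choiceType).

Lemma malgU_scale (k : K) (c : F) : << c *g k >> = c *: (<< k >> : {malg F[K]}).
Proof. by apply/malgP => k'; rewrite mcoeffZ !mcoeffU mulr_natr. Qed.

Lemma big_msuppU (V : nmodType) (k : K) (f : K -> V) :
  \sum_(x <- msupp (<< k >> : {malg F[K]})) f x = f k.
Proof. by rewrite msuppU oner_eq0 big_seq_fset1. Qed.

End MonomialAlgebra.

(* The brackets below are simplified through these abstract identities and after
   generalizing [Wb F]: rewriting directly in {malg F[K]} lets failed matches
   unfold monoid-algebra elements, which does not terminate in practice. *)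
Lemma opprB_sum4 (V : zmodType) (x y z u : V) : z + u - x - y = - (x + y - z - u).
Proof. by rewrite !opprB opprD -!addrA addrCA. Qed.

Lemma scaler_addD1_sub (R : pzRingType) (V : lmodType R) (a e : R) (x y : V) :
  x + (a + 1) *: y - (x + a *: y - e *: y) = (e + 1) *: y.
Proof. by rewrite opprB !scalerDl scale1r [x + _]addrA [LHS]addrC subrKA. Qed.

Section Bracket.

Variables (F : fieldType) (n m : nat).
Implicit Types (k l : Widx n m) (i j : 'I_(n + m)).

Lemma Wbr_Wb k l : Wbr (Wb F k) (Wb F l) = brB F k l.
Proof. by rewrite /Wbr !big_msuppU /Wb !mcoeffUU mulr1 scale1r. Qed.

Lemma brBC k l : brB F l k = - brB F k l.
Proof.
case: k => [[a b] i]; case: l => [[c d] j] /=.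
by rewrite (taddC a c) (taddC b d); apply: opprB_sum4.
Qed.

Lemma brB_partial i c d j :
  brB F (tzero n, tzero (n + m), i) (c, tadd (teps i) d, j) =
  (acoef c i)%:~R *: Wb F (c, tadd (teps i) d, j) + (tnth d i + 1)%:~R *: Wb F (c, d, j).
Proof.
rewrite /= !tadd0l acoef_tzero tnth_tzero tsubeps_teps_add tnth_teps_add !mulr0z.
by move: (Wb F) => w; rewrite !scale0r !subr0.
Qed.

Lemma brB_xpartial i c d j :
  brB F (tzero n, teps i, i) (c, d, j) =
  (acoef c i)%:~R *: Wb F (c, tadd (teps i) d, j) + (tnth d i)%:~R *: Wb F (c, d, j)
   - (j == i)%:R *: Wb F (c, d, j).
Proof.
rewrite /= !tadd0l acoef_tzero tnth_teps mulr0z.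
case: (eqVneq j i) => [->|_]; rewrite ?tsubeps_teps_add;
  by move: (Wb F) => w; rewrite ?scale0r ?subr0.
Qed.

Lemma brB_partial_x2partial i :
  brB F (tzero n, tzero (n + m), i) (tzero n, tadd (teps i) (teps i), i) =
  2%:R *: Wb F (tzero n, teps i, i).
Proof.
rewrite brB_partial acoef_tzero tnth_teps eqxx.
by move: (Wb F) => w; rewrite scale0r add0r.
Qed.

Lemma brB_partial_sub_xpartial i c d j :
  brB F (tzero n, tzero (n + m), i) (c, tadd (teps i) d, j)
  - brB F (tzero n, teps i, i) (c, d, j) = ((j == i)%:R + 1) *: Wb F (c, d, j).
Proof.
by rewrite brB_partial brB_xpartial intrD mulr1z; apply: scaler_addD1_sub.
Qed.

End Bracket.

Section Ideal.

Variables (F : fieldType) (n m : nat) (I : W F n m -> Prop).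
Hypothesis idealI : is_ideal I.

Lemma ideal_sub x y : I x -> I y -> I (x - y).
Proof.
case: idealI => _ ID IZ _ Ix Iy.
by apply: ID => //; rewrite -scaleN1r; apply: IZ.
Qed.

Lemma ideal_scaleK (c : F) x : c != 0 -> I (c *: x) -> I x.
Proof.
case: idealI => _ _ IZ _ c0 /(IZ c^-1).
by rewrite scalerA mulVf // scale1r.
Qed.

Lemma ideal_brBr l : I (Wb F l) -> forall k, I (brB F k l).
Proof. by case: idealI => _ _ _ IBr /IBr Ibr k; rewrite -Wbr_Wb. Qed.

Lemma ideal_brBl k : I (Wb F k) -> forall l, I (brB F k l).
Proof.
move=> /ideal_brBr Ibr l; move: (Ibr l); rewrite brBC => INbr.
by apply: (@ideal_scaleK (-1)); rewrite ?oppr_eq0 ?oner_eq0 // scaleN1r.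
Qed.

Lemma ideal_full_of_basis : (forall k, I (Wb F k)) -> forall x, I x.
Proof.
case: idealI => I0 ID IZ _ Ib x; rewrite (monalgE x).
by apply: big_ind => // k _; rewrite malgU_scale; apply/IZ/Ib.
Qed.

End Ideal.

Theorem lemma2 (F : fieldType) (n m : nat) (charF0 : [pchar F] =i pred0)
  (I : W F n m -> Prop) (HI : is_ideal I) (i : 'I_(n + m)) (Hi : I (Wd F i)) :
  forall x : W F n m, I x.
Proof.
have two_neq0 : (2%:R : F) != 0 by rewrite natf_neq0_pchar pnatE // inE /= charF0.
have Id : I (Wb F (tzero n, tzero (n + m), i)) := Hi.
have Ixd : I (Wb F (tzero n, teps i, i)).
  apply: (ideal_scaleK HI two_neq0); rewrite -brB_partial_x2partial.
  exact: (ideal_brBl HI Id _).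
apply: (ideal_full_of_basis HI) => -[[c d] j].
have coef_neq0 : ((j == i)%:R + 1 : F) != 0.
  by case: (j == i); [exact: two_neq0 | rewrite add0r oner_eq0].
apply: (ideal_scaleK HI coef_neq0); rewrite -brB_partial_sub_xpartial.
apply: (ideal_sub HI); [exact: (ideal_brBl HI Id _) | exact: (ideal_brBl HI Ixd _)].
Qed.
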